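(* Let $S$ be a solid and let $x\in S^*$ with $x=a+e(x)$ for some $a\in S$ with $e(a)=0$. Then (1) $e(x)<|a|$; and (2) $e(x)a^{-1}=e(x)x^{-1}=e(u(x))$.
   Context: A solid is a set $S$ with two binary operations $+$ and $\cdot$ (written $xy$) and a binary relation $\le$ satisfying the following axioms (all variables range over $S$). (A1) $+$ is associative and commutative. (A2) For each $x$ there is $e$ with $x+e=x$ such that $e+f=e$ for every $f$ with $x+f=x$; this $e$ is unique and is denoted $e(x)$ (the magnitude of $x$). An element $x$ with $x=e(x)$ is called a magnitude. (A3) For each $x$ there is $s$ with $x+s=e(x)$ and $e(s)=e(x)$; it is unique and denoted $-x$; write $x-y$ for $x+(-y)$. (A4) $e(x+y)=e(x)$ or $e(x+y)=e(y)$. (M1) $\cdot$ is associative and commutative. (M2) For each $x\neq e(x)$ there is $u$ with $xu=x$ such that $uv=u$ for every $v$ with $xv=x$; it is unique and denoted $u(x)$. (M3) For each $x\ne e(x)$ there is $d$ with $xd=u(x)$ and $u(d)=u(x)$; it is unique and denoted $x^{-1}$; write $y/x$ for $yx^{-1}$. (M4) If $x\neq e(x)$ and $y\ne e(y)$ then $u(xy)=u(x)$ or $u(xy)=u(y)$. (O1) $\le$ is a total order (reflexive, antisymmetric, transitive, total); $x<y$ means $x\le y$ and $x\ne y$. (O2) $x\le y\Rightarrow x+z\le y+z$. (O3) $y+e(x)=e(x)\Rightarrow (y\le e(x)$ and $-y\le e(x))$. (O4) $(e(x)<x$ and $y\le z)\Rightarrow xy\le xz$. (O5) $e(y)\le y\le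 z\Rightarrow e(x)y\le e(x)z$. (AM1) For all $x,y$ there is $z$ with $e(x)y=e(z)$. (AM2) $e(xy)=e(x)y+e(y)x$. (AM3) If $x\ne e(x)$ then $e(u(x))=e(x)/x$. (AM4) (distributivity axiom) $xy+xz=x(y+z)+e(x)y+e(x)z$. (AM5) $-(xy)=(-x)y$. (E1) There is $m$ with $m+x=x$ for all $x$; it is unique, called zero and denoted $0$. (E2) There is $u$ with $ux=x$ for all $x$; it is unique, called one and denoted $1$. (E3) There is $M$ with $e(x)+M=M$ for all $x$. (E4) There is $x$ with $e(x)\ne 0$ and $e(x)\ne M$. (E5) For every $x$ there is $a$ with $x=a+e(x)$ and $e(a)=0$. (E6) If $x,y$ are magnitudes with $x<y$, there is $z$ with $z\ne e(z)$ and $x<z<y$. Further notation: $S^*=\{x\in S: x\ne e(x)\}$ (zeroless elements). $x$ is positive if $e(x)\le x$ and negative if $x<e(x)$; $|x|=x$ if $x$ is positive and $|x|=-x$ if $x$ is negative. $x$ is precise if $e(x)=0$. The relative uncertainty $R(x)$ is $e(u(x))$ if $x\ne e(x)$, and $M$ (from (E3)) if $x=e(x)$. *)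

From Stdlib Require Import Classical ClassicalEpsilon.

Set Implicit Arguments.

Record solid := Solid {
  car :> Type;
  add : car -> car -> car;
  mul : car -> car -> car;
  le  : car -> car -> Prop;
  (* the (partially) defined operations of the axioms, as functions *)
  mag : car -> car;          (* e(x)  *)
  opp : car -> car;
  unt : car -> car;          (* u(x), meaningful for x in S* *)
  inv : car -> car;          (* x^-1, meaningful for x in S* *)
  zero : car;
  one  : car;
  addA : forall x y z, add x (add y z) = add (add x y) z;
  addC : forall x y, add x y = add y x;
  magP : forall x, add x (mag x) = x /\
           (forall f, add x f = x -> add (mag x) f = mag x);
  magU : forall x e', add x e' = x ->
           (forall f, add x f = x -> add e' f = e') -> e' = mag x;
  oppP : forall x, add x (opp x) = mag x /\ mag (opp x) = mag x;
  oppU : forall x s, add x s = mag x -> mag s = mag x -> s = opp x;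
  A4 : forall x y, mag (add x y) = mag x \/ mag (add x y) = mag y;
  mulA : forall x y z, mul x (mul y z) = mul (mul x y) z;
  mulC : forall x y, mul x y = mul y x;
  untP : forall x, x <> mag x -> mul x (unt x) = x /\
           (forall v, mul x v = x -> mul (unt x) v = unt x);
  untU : forall x u', x <> mag x -> mul x u' = x ->
           (forall v, mul x v = x -> mul u' v = u') -> u' = unt x;
  (* (M3): u(d) is only defined for zeroless d *)
  invP : forall x, x <> mag x ->
           mul x (inv x) = unt x /\ inv x <> mag (inv x) /\ unt (inv x) = unt x;
  invU : forall x d, x <> mag x -> mul x d = unt x -> d <> mag d ->
           unt d = unt x -> d = inv x;
  (* (M4): u(xy) is only defined for zeroless xy *)
  M4 : forall x y, x <> mag x -> y <> mag y ->
         mul x y <> mag (mul x y) /\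
         (unt (mul x y) = unt x \/ unt (mul x y) = unt y);
  le_refl : forall x, le x x;
  le_antisym : forall x y, le x y -> le y x -> x = y;
  le_trans : forall x y z, le x y -> le y z -> le x z;
  le_total : forall x y, le x y \/ le y x;
  O2 : forall x y z, le x y -> le (add x z) (add y z);
  O3 : forall x y, add y (mag x) = mag x -> le y (mag x) /\ le (opp y) (mag x);
  O4 : forall x y z, (le (mag x) x /\ mag x <> x) -> le y z ->
         le (mul x y) (mul x z);
  O5 : forall x y z, le (mag y) y -> le y z ->
         le (mul (mag x) y) (mul (mag x) z);
  AM1 : forall x y, exists z, mul (mag x) y = mag z;
  AM2 : forall x y, mag (mul x y) = add (mul (mag x) y) (mul (mag y) x);
  AM3 : forall x, x <> mag x -> mag (unt x) = mul (mag x) (inv x);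
  AM4 : forall x y z, add (mul x y) (mul x z) =
          add (add (mul x (add y z)) (mul (mag x) y)) (mul (mag x) z);
  AM5 : forall x y, opp (mul x y) = mul (opp x) y;
  zeroP : forall x, add zero x = x;
  oneP  : forall x, mul one x = x;
  E34 : exists M, (forall x, add (mag x) M = M) /\
          exists x, mag x <> zero /\ mag x <> M;
  E5 : forall x, exists a, x = add a (mag x) /\ mag a = zero;
  E6 : forall x y, x = mag x -> y = mag y -> (le x y /\ x <> y) ->
         exists z, z <> mag z /\ (le x z /\ x <> z) /\ (le z y /\ z <> y)
}.

Arguments add {s0}.
Arguments mul {s0}.
Arguments le {s0}.
Arguments mag {s0}.
Arguments opp {s0}.
Arguments unt {s0}.
Arguments inv {s0}.

Definition lt {S : solid} (x y : S) : Prop := le x y /\ x <> y.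

Definition absv {S : solid} (x : S) : S :=
  if excluded_middle_informative (le (mag x) x) then x else opp x.

(* Part (1): if |a| <= e(x), then a + e(x) collapses to e(x), so x would be a magnitude.
   Part (2): a^-1 is precise with a a^-1 = 1, hence w := x a^-1 = 1 + K with K := e(x) a^-1
   a magnitude, and x = w a.  By (M4), u(x) is u(w) or u(a) = 1.  Multiplying e(x) < |a| by
   |a^-1| gives K <= 1, whence K w = K and e(u(w)) = e(w) w^-1 = K w^-1 = K.  If instead
   u(x) = 1, then e(u(x)) = e(1) = 0 forces e(x) = 0 and K = 0. *)
From Stdlib Require Import Classical ClassicalEpsilon.

Arguments addA {s0}.
Arguments addC {s0}.
Arguments magP {s0}.
Arguments magU {s0}.
Arguments oppP {s0}.
Arguments oppU {s0}.
Arguments A4 {s0}.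
Arguments mulA {s0}.
Arguments mulC {s0}.
Arguments untP {s0}.
Arguments invP {s0}.
Arguments M4 {s0}.
Arguments le_refl {s0}.
Arguments le_antisym {s0}.
Arguments le_trans {s0}.
Arguments le_total {s0}.
Arguments O2 {s0}.
Arguments O3 {s0}.
Arguments O4 {s0}.
Arguments O5 {s0}.
Arguments AM1 {s0}.
Arguments AM2 {s0}.
Arguments AM3 {s0}.
Arguments AM4 {s0}.
Arguments AM5 {s0}.
Arguments zeroP {s0}.
Arguments oneP {s0}.
Arguments E5 {s0}.

Section SolidTheory.

Context {S : solid}.

Lemma add0r (x : S) : add x (zero S) = x.
Proof. rewrite addC; apply zeroP. Qed.

Lemma mul1r (x : S) : mul x (one S) = x.
Proof. rewrite mulC; apply oneP. Qed.

Lemma add_mag_idem (x : S) : add (mag x) (mag x) = mag x.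
Proof. apply (proj2 (magP x)), magP. Qed.

Lemma mag_idem (x : S) : mag (mag x) = mag x.
Proof. symmetry; apply magU; [apply add_mag_idem | trivial]. Qed.

Lemma add_magnitude_idem (m : S) : mag m = m -> add m m = m.
Proof. intro Hm; rewrite <- Hm; apply add_mag_idem. Qed.

Lemma mag0 : mag (zero S) = zero S.
Proof. rewrite <- (zeroP (mag (zero S))); apply magP. Qed.

Lemma mag_opp (x : S) : mag (opp x) = mag x.
Proof. apply oppP. Qed.

Lemma opp_magnitude (m : S) : mag m = m -> opp m = m.
Proof.
  intro Hm; symmetry; apply oppU; [| reflexivity].
  rewrite <- Hm, mag_idem; apply add_mag_idem.
Qed.

Lemma opp0 : opp (zero S) = zero S.
Proof. exact (opp_magnitude _ mag0). Qed.

Lemma oppK (x : S) : opp (opp x) = x.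
Proof.
  symmetry; apply oppU; rewrite mag_opp; [| reflexivity].
  rewrite addC; apply oppP.
Qed.

Lemma mulNl (x y : S) : mul (opp x) y = opp (mul x y).
Proof. symmetry; apply AM5. Qed.

Lemma mulNr (x y : S) : mul x (opp y) = opp (mul x y).
Proof. rewrite (mulC x), mulNl, (mulC y); reflexivity. Qed.

Lemma mag_mul_mag (x y : S) : mag (mul (mag x) y) = mul (mag x) y.
Proof. destruct (AM1 x y) as [z Hz]; rewrite Hz; apply mag_idem. Qed.

Lemma le0_magnitude (m : S) : mag m = m -> le (zero S) m.
Proof. intro Hm; rewrite <- Hm; apply (O3 m), zeroP. Qed.

Lemma le_of_not_le (x y : S) : ~ le x y -> le y x.
Proof. intro H; destruct (le_total x y); [contradiction | assumption]. Qed.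

Lemma add_absorb_magnitude (p m : S) :
  mag m = m -> le (zero S) p -> le p m -> add p m = m.
Proof.
  intros Hm H0p Hpm; apply le_antisym.
  - rewrite <- (add_magnitude_idem m Hm) at 2; apply O2, Hpm.
  - rewrite <- (zeroP m) at 1; apply O2, H0p.
Qed.

Lemma absv_cases (y : S) : absv y = y \/ absv y = opp y.
Proof. unfold absv; destruct (excluded_middle_informative _); auto. Qed.

Lemma mag_absv (y : S) : mag (absv y) = mag y.
Proof. destruct (absv_cases y) as [E | E]; rewrite E; [reflexivity | apply mag_opp]. Qed.

Lemma mag_le_absv (y : S) : le (mag y) (absv y).
Proof.
  unfold absv; destruct (excluded_middle_informative (le (mag y) y)) as [Hpos | Hneg];
    [exact Hpos |].
  pose proof (O2 _ _ (opp y) (le_of_not_le _ _ Hneg)) as H.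
  rewrite (proj1 (oppP y)), addC, <- (mag_opp y), (proj1 (magP (opp y))) in H.
  rewrite <- mag_opp; exact H.
Qed.

Lemma absv_zeroless (y : S) : y <> mag y -> absv y <> mag (absv y).
Proof.
  intro hy; rewrite mag_absv.
  destruct (absv_cases y) as [E | E]; rewrite E; [exact hy |].
  intro Hopp; apply hy.
  rewrite <- (oppK y) at 1; rewrite Hopp; apply opp_magnitude, mag_idem.
Qed.

Lemma absv_mul_cases (y z : S) :
  mul (absv y) (absv z) = mul y z \/ mul (absv y) (absv z) = opp (mul y z).
Proof.
  destruct (absv_cases y) as [Ey | Ey]; destruct (absv_cases z) as [Ez | Ez];
    rewrite Ey, Ez, ?mulNl, ?mulNr, ?oppK; auto.
Qed.

Lemma mag_lt_absv (y b : S) :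
  y <> mag y -> y = add b (mag y) -> mag b = zero S -> lt (mag y) (absv b).
Proof.
  intros hy hyb hb.
  assert (Hnot : ~ le (absv b) (mag y)).
  { intro Hle; apply hy; rewrite hyb at 1.
    assert (Habs : add (absv b) (mag y) = mag y).
    { apply add_absorb_magnitude; [apply mag_idem | rewrite <- hb; apply mag_le_absv | exact Hle]. }
    destruct (absv_cases b) as [E | E]; rewrite E in Habs; [exact Habs |].
    rewrite <- Habs at 1; rewrite addA, (proj1 (oppP b)), hb; apply zeroP. }
  split; [apply le_of_not_le, Hnot |].
  intro E; apply Hnot; rewrite <- E; apply le_refl.
Qed.

Lemma mul00 : mul (zero S) (zero S) = zero S.
Proof.
  assert (H0 : le (mag (zero S)) (zero S)) by (rewrite mag0; apply le_refl).
  apply le_antisym.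
  - destruct (le_total (zero S) (one S)) as [H01 | H10].
    + pose proof (O5 (zero S) _ _ H0 H01) as H; rewrite mag0, mul1r in H; exact H.
    + assert (H0N1 : le (zero S) (opp (one S))).
      { pose proof (O2 _ _ (opp (one S)) H10) as H.
        rewrite (proj1 (oppP (one S))), zeroP in H.
        apply le_trans with (mag (one S)); [apply le0_magnitude, mag_idem | exact H]. }
      pose proof (O5 (zero S) _ _ H0 H0N1) as H.
      rewrite mag0, mulNr, mul1r, opp0 in H; exact H.
  - apply le0_magnitude; rewrite <- mag0 at 1 3; apply mag_mul_mag.
Qed.

Lemma mul_precise0 (p : S) : mag p = zero S -> mul p (zero S) = zero S.
Proof.
  intro hp; pose proof (AM4 p (one S) (zero S)) as H.
  rewrite add0r, mul1r, hp, mul1r, mul00, !add0r in H.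
  pose proof (proj2 (magP p) _ H) as H'; rewrite hp, zeroP in H'; exact H'.
Qed.

Lemma mul0_precise (p : S) : mag p = zero S -> mul (zero S) p = zero S.
Proof. intro hp; rewrite mulC; apply mul_precise0, hp. Qed.

(* The precise part of y dominates e(y), and zero annihilates precise elements. *)
Lemma mul0_mag (y : S) : y <> mag y -> mul (zero S) (mag y) = zero S.
Proof.
  intro hy; destruct (E5 y) as [b [hyb hb]].
  assert (Hr : le (mag (mag y)) (mag y)) by (rewrite mag_idem; apply le_refl).
  pose proof (O5 (zero S) _ _ Hr (proj1 (mag_lt_absv y b hy hyb hb))) as H.
  rewrite mag0, (mul0_precise (absv b)) in H by (rewrite mag_absv; exact hb).
  apply le_antisym; [exact H |].
  apply le0_magnitude; rewrite <- mag0 at 1 2; apply mag_mul_mag.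
Qed.

Lemma mul0_zeroless (y : S) : y <> mag y -> mul (zero S) y = zero S.
Proof.
  intro hy; destruct (E5 y) as [b [hyb hb]].
  pose proof (AM4 (zero S) b (mag y)) as H.
  rewrite <- hyb, mag0, mul0_precise, mul0_mag, !add0r in H by assumption.
  symmetry; exact H.
Qed.

Lemma mul_mag_unt (y : S) : y <> mag y -> mul (mag y) (unt y) = mag y.
Proof.
  intro hy; pose proof (AM2 y (unt y)) as H.
  rewrite (proj1 (untP y hy)), (AM3 y hy), <- mulA, (mulC (inv y) y),
    (proj1 (invP y hy)), add_magnitude_idem in H by apply mag_mul_mag.
  symmetry; exact H.
Qed.

Lemma mag_unt_of_fixed (w : S) :
  w <> mag w -> mul (mag w) w = mag w -> mag (unt w) = mag w.
Proof.
  intros hw Hfix.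
  rewrite (AM3 w hw), <- Hfix at 1; rewrite <- mulA, (proj1 (invP w hw)).
  apply mul_mag_unt, hw.
Qed.

Lemma one_zeroless (x : S) : x <> mag x -> one S <> mag (one S).
Proof.
  intros hx H1; apply hx.
  assert (E : mul (mag (one S)) x = x) by (rewrite <- H1; apply oneP).
  rewrite <- E at 2; rewrite mag_mul_mag; symmetry; exact E.
Qed.

Lemma mag1 : one S <> mag (one S) -> mag (one S) = zero S.
Proof.
  intro h1; destruct (E5 (one S)) as [b [h1b hb]].
  assert (HEb : mul (mag (one S)) b = zero S).
  { pose proof (AM2 (one S) b) as H; rewrite oneP, hb, mul1r, add0r in H.
    symmetry; exact H. }
  assert (HEabs : mul (mag (one S)) (absv b) = zero S).
  { destruct (absv_cases b) as [E | E]; rewrite E, ?mulNr, HEb; [reflexivity | apply opp0]. }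
  assert (HEE : mul (mag (one S)) (mag (one S)) = zero S).
  { assert (Hr : le (mag (mag (one S))) (mag (one S))) by (rewrite mag_idem; apply le_refl).
    pose proof (O5 (one S) _ _ Hr (proj1 (mag_lt_absv _ b h1 h1b hb))) as H.
    rewrite HEabs in H; apply le_antisym; [exact H |].
    apply le0_magnitude, mag_mul_mag. }
  pose proof (AM4 (mag (one S)) b (mag (one S))) as H.
  rewrite mag_idem, HEb, HEE, <- h1b, mul1r, !add0r in H.
  symmetry; exact H.
Qed.

Lemma le01 : one S <> mag (one S) -> le (zero S) (one S).
Proof.
  intro h1; pose proof (mag1 h1) as hm1.
  apply le_of_not_le; intro H10.
  pose proof (O2 _ _ (opp (one S)) H10) as H.
  rewrite (proj1 (oppP (one S))), zeroP, hm1 in H.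
  assert (Hm : mag (opp (one S)) = zero S) by (rewrite mag_opp; exact hm1).
  assert (Hnz : mag (opp (one S)) <> opp (one S)).
  { rewrite Hm; intro E; apply h1; rewrite hm1, <- (oppK (one S)), <- E; apply opp0. }
  assert (Hp : le (mag (opp (one S))) (opp (one S))) by (rewrite Hm; exact H).
  pose proof (O4 _ _ _ (conj Hp Hnz) H10) as H2.
  rewrite mul1r, mul_precise0 in H2 by exact Hm.
  apply Hnz; rewrite Hm; apply le_antisym; assumption.
Qed.

Section PreciseZeroless.

Variable a : S.
Hypotheses (hza : a <> mag a) (ha : mag a = zero S).

Lemma mag_unt_precise : mag (unt a) = zero S.
Proof. rewrite (AM3 a hza), ha; apply mul0_zeroless, invP, hza. Qed.

Lemma mag_inv_precise : mag (inv a) = zero S.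
Proof.
  destruct (invP a hza) as [Hi1 [Hi2 Hi3]].
  pose proof (AM2 a (inv a)) as H.
  rewrite Hi1, mag_unt_precise, ha, mul0_zeroless, zeroP in H by exact Hi2.
  rewrite <- (mul_mag_unt _ Hi2), Hi3, <- Hi1, mulA, <- H; apply mul0_zeroless, Hi2.
Qed.

(* u(a) is an idempotent with u(a)(1 - u(a)) = 0; (M4) forbids 1 - u(a) from being
   zeroless, and its magnitude is e(1) or e(u(a)), both 0. *)
Lemma unt_precise : unt a = one S.
Proof.
  pose proof mag_unt_precise as hu0.
  destruct (untP a hza) as [Hau Hmin]; pose proof (Hmin _ Hau) as Huu.
  assert (Huz : unt a <> mag (unt a)).
  { rewrite hu0; intro E; apply hza.
    rewrite ha, <- Hau, E; apply mul_precise0, ha. }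
  assert (Hmo : mag (opp (unt a)) = zero S) by (rewrite mag_opp; exact hu0).
  assert (Hann : mul (unt a) (add (one S) (opp (unt a))) = zero S).
  { pose proof (AM4 (unt a) (one S) (opp (unt a))) as H.
    rewrite mul1r, mulNr, Huu, (proj1 (oppP (unt a))), hu0, mul1r,
      mul0_precise, !add0r in H by exact Hmo.
    symmetry; exact H. }
  destruct (classic (add (one S) (opp (unt a)) = mag (add (one S) (opp (unt a)))))
    as [Emag | Ezl].
  - assert (H1u : add (one S) (opp (unt a)) = zero S).
    { rewrite Emag; destruct (A4 (one S) (opp (unt a))) as [Q | Q]; rewrite Q;
        [apply mag1, (one_zeroless a hza) | exact Hmo]. }
    rewrite <- (add0r (one S)), <- hu0, <- (proj1 (oppP (unt a))), addA,
      (addC (one S)), <- addA, H1u; symmetry; apply add0r.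
  - exfalso; apply (proj1 (M4 _ _ Huz Ezl)); rewrite Hann; symmetry; apply mag0.
Qed.

Lemma mul_inv_precise : mul (inv a) a = one S.
Proof. rewrite mulC, (proj1 (invP a hza)); exact unt_precise. Qed.

End PreciseZeroless.

Section PrecisePart.

Variables x a : S.
Hypotheses (hx : x <> mag x) (hxa : x = add a (mag x)) (ha : mag a = zero S).

Local Notation K := (mul (mag x) (inv a)).

Lemma precise_part_zeroless : a <> mag a.
Proof. intro E; apply hx; rewrite hxa at 1; rewrite E, ha; apply zeroP. Qed.

Let hza := precise_part_zeroless.

Lemma magnitude_mul_inv : mag K = K.
Proof. apply mag_mul_mag. Qed.

Lemma mul_inv_precise_part : mul x (inv a) = add (one S) K.
Proof.
  pose proof (AM4 (inv a) a (mag x)) as H.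
  rewrite mul_inv_precise, mag_inv_precise, mul0_precise, mul0_mag, !add0r, <- hxa in H
    by assumption.
  rewrite mulC, <- H, (mulC (inv a)); reflexivity.
Qed.

Lemma mag_mul_inv_precise_part : mag (mul x (inv a)) = K.
Proof. rewrite AM2, mag_inv_precise, mul0_zeroless, add0r by assumption; reflexivity. Qed.

(* Multiply e(x) < |a| by the strictly positive |a^-1|, using |a^-1| |a| = 1 or -1. *)
Lemma mul_mag_inv_le1 : le K (one S).
Proof.
  pose proof (one_zeroless x hx) as h1.
  pose proof (proj2 (invP a hza)) as [Hiz _].
  assert (Hpos : le (mag (absv (inv a))) (absv (inv a)) /\ mag (absv (inv a)) <> absv (inv a)).
  { rewrite mag_absv; split; [apply mag_le_absv |].
    rewrite <- mag_absv; apply not_eq_sym, absv_zeroless, Hiz. }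
  pose proof (O4 _ _ _ Hpos (proj1 (mag_lt_absv x a hx hxa ha))) as H.
  assert (HK : mul (absv (inv a)) (mag x) = K).
  { rewrite (mulC _ (mag x)); destruct (absv_cases (inv a)) as [E | E]; rewrite E;
      [reflexivity | rewrite mulNr; apply opp_magnitude, magnitude_mul_inv]. }
  rewrite HK in H.
  destruct (absv_mul_cases (inv a) a) as [E | E]; rewrite E, mul_inv_precise in H by assumption;
    [exact H | exfalso].
  pose proof (O2 _ _ (one S) (le_trans _ _ _ (le0_magnitude _ magnitude_mul_inv) H)) as H1.
  rewrite zeroP, addC, (proj1 (oppP (one S))), mag1 in H1 by exact h1.
  apply h1; rewrite mag1 by exact h1; apply le_antisym; [exact H1 | apply le01, h1].
Qed.

Lemma mul_mag_inv_fixed : mul K (add (one S) K) = K.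
Proof.
  pose proof (one_zeroless x hx) as h1.
  assert (Hr : le (mag K) K) by (rewrite magnitude_mul_inv; apply le_refl).
  assert (HKK : add K (mul K K) = K).
  { rewrite addC; apply add_absorb_magnitude; [apply magnitude_mul_inv | |].
    - apply le0_magnitude; rewrite <- magnitude_mul_inv at 1 3; apply mag_mul_mag.
    - pose proof (O5 K _ _ Hr mul_mag_inv_le1) as H.
      rewrite magnitude_mul_inv, mul1r in H; exact H. }
  apply le_antisym.
  - pose proof (AM4 K (one S) K) as H.
    rewrite magnitude_mul_inv, mul1r, HKK, <- addA, HKK in H.
    rewrite <- magnitude_mul_inv; apply (O3 K); rewrite magnitude_mul_inv; symmetry; exact H.
  - assert (H1 : le (mag (one S)) (one S)) by (rewrite mag1 by exact h1; apply le01, h1).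
    assert (H1K : le (one S) (add (one S) K)).
    { rewrite addC, <- (zeroP (one S)) at 1; apply O2, le0_magnitude, magnitude_mul_inv. }
    pose proof (O5 K _ _ H1 H1K) as H; rewrite magnitude_mul_inv, mul1r in H; exact H.
Qed.

Lemma mul_mag_inv_precise_part : K = mag (unt x).
Proof.
  pose proof (proj2 (invP a hza)) as [Hiz _].
  pose proof (proj1 (M4 x (inv a) hx Hiz)) as Hwz.
  assert (Hxw : mul (mul x (inv a)) a = x)
    by (rewrite <- mulA, mul_inv_precise, mul1r by assumption; reflexivity).
  destruct (proj2 (M4 _ a Hwz hza)) as [Q | Q]; rewrite Hxw in Q; rewrite Q.
  - rewrite mag_unt_of_fixed, mag_mul_inv_precise_part; [reflexivity | exact Hwz |].
    rewrite mag_mul_inv_precise_part, mul_inv_precise_part; apply mul_mag_inv_fixed.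
  - assert (Hmx : mag x = zero S).
    { assert (HL : mul (mag x) (inv x) = zero S).
      { rewrite <- (AM3 x hx), Q, unt_precise by assumption.
        apply mag1, (one_zeroless x hx). }
      rewrite <- (mul_mag_unt x hx), <- (proj1 (invP x hx)), (mulC x), mulA, HL.
      apply mul0_zeroless, hx. }
    rewrite unt_precise, mag1, Hmx by first [exact (one_zeroless x hx) | assumption].
    apply mul0_zeroless, Hiz.
Qed.

End PrecisePart.

End SolidTheory.

Theorem mainTheorem10 (S : solid) (x a : S)
  (hx : x <> mag x) (hxa : x = add a (mag x)) (ha : mag a = zero S) :
  lt (mag x) (absv a) /\
  mul (mag x) (inv a) = mul (mag x) (inv x) /\
  mul (mag x) (inv x) = mag (unt x).
Proof.
  split; [exact (mag_lt_absv x a hx hxa ha) |].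
  rewrite <- (AM3 x hx).
  split; [apply mul_mag_inv_precise_part; assumption | reflexivity].
Qed.
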